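(* Let $(\Omega',o)\to(\Omega,o)$ be a holomorphic totally geodesic embedding of pointed bounded symmetric domains, with corresponding injective Lie algebra morphism $\rho:\mathfrak g'\to\mathfrak g$, and let $p=\dim\Omega'$. Then $[\rho(\mathfrak p'^+)]\in\mathrm{Gr}(p,T_o\Omega)$ is a critical point of the function $\mathcal B\mapsto\|\Sigma(\mathcal B)\|^2$ on $\mathrm{Gr}(p,T_o\Omega)$.
   Context: A pointed bounded symmetric domain $(\Omega,o)$, $\Omega=G/K$, has data: $\mathfrak g=\mathfrak l\oplus\mathfrak p$ Cartan decomposition, $H_0$ central in $\mathfrak l$ with $\mathrm{ad}(H_0)^2$ the Cartan involution and $\mathrm{ad}(H_0)|_{\mathfrak p}$ the complex structure at $o$; $\mathfrak p^+\cong T^{1,0}_o\Omega$ is the $\sqrt{-1}$-eigenspace of $\mathrm{ad}H_0$ in $\mathfrak p^{\mathbb C}$, with Hermitian form $(\alpha,\overline\beta)_{\mathcal K}$ ($\mathcal K$ the Killing form); similarly $\mathfrak g',\mathfrak p'^+,H'_0$ for $\Omega'$. Totally geodesic holomorphic embeddings of pointed domains correspond to injective Lie algebra morphisms $\rho:\mathfrak g'\to\mathfrak g$ with $\mathrm{ad}(H_0)\rho=\rho\,\mathrm{ad}(H'_0)$; then $\rho(\mathfrak p'^+)\subset\mathfrak p^+$ is the tangent space of $\Omega'$ at $o$. $\mathrm{Gr}(p,T_o\Omega)$ is the Grassmannian of complex $p$-planes in $\mathfrak p^+$. For $\mathcal B$ with unitary basis $(e_i)$, $\Sigma(\mathcal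 B)=\sqrt{-1}\sum_i[e_i,\overline{e_i}]\in\mathfrak l^{\mathbb C}$, and $\|\cdot\|$ is the norm on $\mathfrak l^{\mathbb C}$ from $(\lambda,\overline\mu)_{\mathcal K}$. *)

From mathcomp Require Import all_boot all_order all_algebra.
From mathcomp Require Import all_classical all_reals all_analysis.
From mathcomp Require Import complex.

Set Implicit Arguments.
Unset Strict Implicit.
Unset Printing Implicit Defensive.

Import GRing.Theory Num.Theory.
Local Open Scope ring_scope.

(* Finite-dimensional Lie algebras over a commutative ring K, on the         *)
(* coordinate space 'rV[K]_n, given by structure constants                   *)
(* [e_i, e_j] = c i j.                                                       *)

Definition lie_br {K : comNzRingType} {n : nat} (c : 'I_n -> 'I_n -> 'rV[K]_n)
  (x y : 'rV[K]_n) : 'rV[K]_n :=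
  \sum_(i < n) \sum_(j < n) (x 0 i * y 0 j) *: c i j.

(* ad x, acting on row vectors on the right: y *m ad c x = [x, y]. *)
Definition ad {K : comNzRingType} {n : nat} (c : 'I_n -> 'I_n -> 'rV[K]_n)
  (x : 'rV[K]_n) : 'M[K]_n :=
  \matrix_(j < n) lie_br c x (delta_mx 0 j).

Definition killing {K : comNzRingType} {n : nat} (c : 'I_n -> 'I_n -> 'rV[K]_n)
  (x y : 'rV[K]_n) : K :=
  \tr (ad c x *m ad c y).

Definition is_lie {K : comNzRingType} {n : nat} (c : 'I_n -> 'I_n -> 'rV[K]_n) :=
  (forall x, lie_br c x x = 0) /\
  (forall x y z, lie_br c x (lie_br c y z) + lie_br c y (lie_br c z x)
                 + lie_br c z (lie_br c x y) = 0).

(* Pointed bounded symmetric domain data (g = l (+) p, H0).                  *)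
(* l and p are (row spaces of) real n x n matrices.                          *)

Section BSD.
Variables (R : realType) (n : nat).
Variable c : 'I_n -> 'I_n -> 'rV[R]_n.
Variables (l p : 'M[R]_n) (H0 : 'rV[R]_n).

Definition is_ideal (I : 'M[R]_n) :=
  forall x y : 'rV[R]_n, (x <= I)%MS -> (lie_br c x y <= I)%MS.

Definition pointed_bsd : Prop :=
  [/\ is_lie c,
      ((l + p == 1%:M)%MS /\ ((l :&: p)%MS == 0)) /\
      (forall x y : 'rV[R]_n, (x <= l)%MS -> (y <= l)%MS -> (lie_br c x y <= l)%MS) /\
      (forall x y : 'rV[R]_n, (x <= l)%MS -> (y <= p)%MS -> (lie_br c x y <= p)%MS) /\
      (forall x y : 'rV[R]_n, (x <= p)%MS -> (y <= p)%MS -> (lie_br c x y <= l)%MS),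
      (forall x : 'rV[R]_n, (x <= l)%MS -> x != 0 -> killing c x x < 0) /\
      (forall x : 'rV[R]_n, (x <= p)%MS -> x != 0 -> 0 < killing c x x),
      (forall I : 'M[R]_n, (I <= l)%MS -> is_ideal I -> I == 0) &
      [/\ (H0 <= l)%MS,
          (forall x : 'rV[R]_n, (x <= l)%MS -> lie_br c H0 x = 0) &
          (forall x : 'rV[R]_n, (x <= p)%MS -> lie_br c H0 (lie_br c H0 x) = - x)]].

End BSD.

Section Complexified.
Variables (R : realType) (n : nat).
Variable c : 'I_n -> 'I_n -> 'rV[R]_n.
Variables (p : 'M[R]_n) (H0 : 'rV[R]_n).

Local Notation C := (R[i]).

Definition toC (x : R) : C := (x%:C)%C.

Definition cC : 'I_n -> 'I_n -> 'rV[C]_n := fun i j => map_mx toC (c i j).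

Definition conjv {m} (x : 'M[C]_(m, n)) : 'M[C]_(m, n) := map_mx (@conjc R) x.

Definition pplus : 'M[C]_n :=
  (map_mx toC p :&: kermx (ad cC (map_mx toC H0) - (Complex 0 1)%:M))%MS.

Definition hermK (a b : 'rV[C]_n) : C := killing cC a (conjv b).

Definition unitary_frame {k} (E : 'M[C]_(k, n)) :=
  forall i j : 'I_k, hermK (row i E) (row j E) = (i == j)%:R.

Definition Sigma {k} (E : 'M[C]_(k, n)) : 'rV[C]_n :=
  (Complex 0 1) *: \sum_(i < k) lie_br cC (row i E) (conjv (row i E)).

(* squared norm on l^C from the Hermitian form (lambda, conj mu)_K;
   since K is negative definite on l we take the positive form -K. *)
Definition normsq (x : 'rV[C]_n) : R := - complex.Re (hermK x x).

Definition frame_curve {k} (V : 'M[C]_n) (gam : R -> 'M[C]_(k, n)) :=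
  (forall t, (gam t <= V)%MS /\ unitary_frame (gam t)) /\
  (forall i j, derivable (fun t => complex.Re (gam t i j)) 0 1 /\
               derivable (fun t => complex.Im (gam t i j)) 0 1).

(* [B] in Gr(k, V) is a critical point of B |-> ||Sigma(B)||^2 :
   along every differentiable curve in Gr(k, V) through [B] (given by a
   curve of unitary frames) the derivative at t = 0 vanishes. *)
Definition Sigma_critical (k : nat) (V : 'M[C]_n) {m} (B : 'M[C]_(m, n)) :=
  forall gam : R -> 'M[C]_(k, n), frame_curve V gam -> (gam 0 == B)%MS ->
    derivable (fun t => normsq (Sigma (gam t))) 0 1 /\
    derive1 (fun t => normsq (Sigma (gam t))) 0 = 0.

End Complexified.

(* Totally geodesic holomorphic embeddings of pointed BSDs: injective Lie    *)
(* algebra morphisms rho : g' -> g (x |-> x *m P) intertwining ad H0' and    *)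
(* ad H0.                                                                    *)

Definition tg_embedding (R : realType) (n n' : nat)
  (c : 'I_n -> 'I_n -> 'rV[R]_n) (H0 : 'rV[R]_n)
  (c' : 'I_n' -> 'I_n' -> 'rV[R]_n') (H0' : 'rV[R]_n')
  (P : 'M[R]_(n', n)) : Prop :=
  [/\ row_free P,
      forall x y : 'rV[R]_n', lie_br c (x *m P) (y *m P) = lie_br c' x y *m P &
      forall x : 'rV[R]_n', lie_br c H0 (x *m P) = lie_br c' H0' x *m P].

(* Let E(t) be a curve of unitary frames, E(0) a frame of rho(p'^+), with
   velocity A.  At t = 0 the derivative of ||Sigma(E(t))||^2 is -2 Re K(S, dS),
   S = Sigma(E(0)), and the invariance of the Killing form K turns K(S, dS) into
   i sum_r (h([S, A_r], E_r) + h([S, E_r], A_r)), h the Hermitian form.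
   Since rho intertwines the brackets and H0, S is the image of an element of
   g'^C centralising H0', so ad S preserves rho(p'^+) = span E.  Its matrix in
   the unitary frame E is skew-Hermitian (S is real), and differentiating
   unitarity gives h(A_r, E_j) = - h(E_r, A_j); hence the two sums cancel. *)

From HB Require Import structures.
From mathcomp Require Import all_boot all_order all_algebra.
From mathcomp Require Import all_classical all_reals all_analysis complex.
From mathcomp Require Import ssrAC ring.

Set Implicit Arguments.
Unset Strict Implicit.
Unset Printing Implicit Defensive.

Import GRing.Theory Num.Theory.
Local Open Scope ring_scope.

Section ComplexCurves.
Variable R : realType.
Local Notation C := R[i].

Definition is_cderive (x : R) (f : R -> C) (d : C) :=
  is_derive x 1 (fun t => complex.Re (f t)) (complex.Re d) /\
  is_derive x 1 (fun t => complex.Im (f t)) (complex.Im d).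

Lemma complex_ReD (a b : C) : complex.Re (a + b) = complex.Re a + complex.Re b.
Proof. by case: a; case: b. Qed.

Lemma complex_ImD (a b : C) : complex.Im (a + b) = complex.Im a + complex.Im b.
Proof. by case: a; case: b. Qed.

Lemma complex_ReM (a b : C) :
  complex.Re (a * b) = complex.Re a * complex.Re b - complex.Im a * complex.Im b.
Proof. by case: a; case: b. Qed.

Lemma complex_ImM (a b : C) :
  complex.Im (a * b) = complex.Re a * complex.Im b + complex.Im a * complex.Re b.
Proof. by case: a => ? ?; case: b => ? ? /=; rewrite addrC. Qed.

Lemma complex_ReJ (a : C) : complex.Re (conjc a) = complex.Re a.
Proof. by case: a. Qed.

Lemma complex_ImJ (a : C) : complex.Im (conjc a) = - complex.Im a.
Proof. by case: a. Qed.

Variable x : R.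

Lemma is_cderive_cst (a : C) : is_cderive x (fun=> a) 0.
Proof. by split; apply: is_derive_cst. Qed.

Lemma is_cderiveD f g a b : is_cderive x f a -> is_cderive x g b ->
  is_cderive x (fun t => f t + g t) (a + b).
Proof.
move=> [fRe fIm] [gRe gIm]; split.
  under eq_fun do rewrite complex_ReD.
  by rewrite complex_ReD; apply: is_deriveD.
under eq_fun do rewrite complex_ImD.
by rewrite complex_ImD; apply: is_deriveD.
Qed.

Lemma is_cderiveM f g a b : is_cderive x f a -> is_cderive x g b ->
  is_cderive x (fun t => f t * g t) (a * g x + f x * b).
Proof.
move=> [fRe fIm] [gRe gIm]; split.
  under eq_fun do rewrite complex_ReM.
  apply: is_derive_eq; rewrite complex_ReD !complex_ReM /GRing.scale /=; ring.
under eq_fun do rewrite complex_ImM.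
apply: is_derive_eq; rewrite complex_ImD !complex_ImM /GRing.scale /=; ring.
Qed.

Lemma is_cderive_conj f a :
  is_cderive x f a -> is_cderive x (fun t => conjc (f t)) (conjc a).
Proof.
move=> [fRe fIm]; split.
  by under eq_fun do rewrite complex_ReJ; rewrite complex_ReJ.
under eq_fun do rewrite complex_ImJ.
by rewrite complex_ImJ; apply: is_deriveN.
Qed.

Lemma is_cderive_sum (I : finType) (F : I -> R -> C) (D : I -> C) :
  (forall i, is_cderive x (F i) (D i)) ->
  is_cderive x (fun t => \sum_i F i t) (\sum_i D i).
Proof.
move=> FD; elim: (index_enum I) => [|i r IHr].
  by under eq_fun do rewrite big_nil; rewrite big_nil; apply: is_cderive_cst.
by under eq_fun do rewrite big_cons; rewrite big_cons; apply: is_cderiveD.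
Qed.

Lemma is_cderive_unique f a b : is_cderive x f a -> is_cderive x f b -> a = b.
Proof.
move=> [fRe_a fIm_a] [fRe_b fIm_b]; apply/eqP; rewrite eq_complex.
by rewrite -[complex.Re a]derive_val -[complex.Re b]derive_val
  -[complex.Im a]derive_val -[complex.Im b]derive_val !eqxx.
Qed.

Definition is_mxcderive a b (F : R -> 'M[C]_(a, b)) (D : 'M[C]_(a, b)) :=
  forall i j, is_cderive x (fun t => F t i j) (D i j).

Lemma scalar_mx_expand a b (f : 'M[C]_(a, b) -> C) X : scalar f ->
  f X = \sum_i \sum_j X i j * f (delta_mx i j).
Proof.
move=> f_lin.
pose fL : {scalar 'M[C]_(a, b)} := HB.pack f (GRing.isLinear.Build _ _ _ _ f f_lin).
change f with (fL : _ -> _); rewrite {1}(matrix_sum_delta X) linear_sum.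
by apply: eq_bigr => i _; rewrite linear_sum; apply: eq_bigr => j _; rewrite linearZ.
Qed.

Lemma is_cderive_scalar a b (f : 'M[C]_(a, b) -> C) F D : scalar f ->
  is_mxcderive F D -> is_cderive x (fun t => f (F t)) (f D).
Proof.
move=> f_lin FD; under eq_fun do rewrite (scalar_mx_expand _ f_lin).
rewrite (scalar_mx_expand _ f_lin); apply: is_cderive_sum => i; apply: is_cderive_sum => j.
by have := is_cderiveM (FD i j) (is_cderive_cst (f (delta_mx i j))); rewrite mulr0 addr0.
Qed.

Lemma is_cderive_biscalar a b a' b' (phi : 'M[C]_(a, b) -> 'M[C]_(a', b') -> C) F G DF DG :
  (forall Y, scalar (phi^~ Y)) -> (forall X, scalar (phi X)) ->
  is_mxcderive F DF -> is_mxcderive G DG ->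
  is_cderive x (fun t => phi (F t) (G t)) (phi DF (G x) + phi (F x) DG).
Proof.
move=> phi_linl phi_linr FD GD; under eq_fun do rewrite (scalar_mx_expand _ (phi_linl _)).
rewrite (scalar_mx_expand DF (phi_linl _)) (scalar_mx_expand (F x) (phi_linl _)) -big_split.
apply: is_cderive_sum => i; rewrite -big_split; apply: is_cderive_sum => j /=.
exact: is_cderiveM (FD i j) (is_cderive_scalar (phi_linr (delta_mx i j)) GD).
Qed.

Lemma is_mxcderive_bilinear a b a' b' e g
    (psi : 'M[C]_(a, b) -> 'M[C]_(a', b') -> 'M[C]_(e, g)) F G DF DG :
  (forall Y, linear (psi^~ Y)) -> (forall X, linear (psi X)) ->
  is_mxcderive F DF -> is_mxcderive G DG ->
  is_mxcderive (fun t => psi (F t) (G t)) (psi DF (G x) + psi (F x) DG).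
Proof.
move=> psi_linl psi_linr FD GD i j; rewrite mxE.
apply: (is_cderive_biscalar (phi := fun X Y => psi X Y i j)) => // [Y|X] k U V /=.
  by rewrite psi_linl !mxE.
by rewrite psi_linr !mxE.
Qed.

Lemma is_mxcderive_conj a b (F : R -> 'M[C]_(a, b)) D :
  is_mxcderive F D -> is_mxcderive (fun t => map_mx conjc (F t)) (map_mx conjc D).
Proof.
by move=> FD i j; under eq_fun do rewrite mxE; rewrite mxE; apply: is_cderive_conj.
Qed.

End ComplexCurves.

Section LieAlgebra.
Variables (K : comNzRingType) (n : nat) (c : 'I_n -> 'I_n -> 'rV[K]_n).

Lemma lie_br_is_bilinear : bilinear_for
  (GRing.Scale.Law.clone _ _ *:%R _) (GRing.Scale.Law.clone _ _ *:%R _) (lie_br c).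
Proof.
split=> [y|x] k u v /=; rewrite /lie_br scaler_sumr -big_split /=;
  apply: eq_bigr => i _; rewrite scaler_sumr -big_split /=;
  apply: eq_bigr => j _; rewrite !mxE scalerA -scalerDl; congr (_ *: _).
  by rewrite mulrDl mulrA.
by rewrite mulrDr mulrCA.
Qed.

HB.instance Definition _ := bilinear_isBilinear.Build K 'rV[K]_n 'rV[K]_n 'rV[K]_n
  _ _ (lie_br c) lie_br_is_bilinear.

Lemma mul_ad v x : v *m ad c x = lie_br c x v.
Proof.
rewrite mulmx_sum_row {2}(row_sum_delta v) linear_sumr.
by apply: eq_bigr => i _; rewrite rowK linearZr.
Qed.

Lemma ad_is_linear : linear (ad c).
Proof. by move=> k x y; apply/matrixP => i j; rewrite !mxE linearPl !mxE. Qed.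

HB.instance Definition _ := GRing.isLinear.Build K 'rV[K]_n 'M[K]_n _ (ad c) ad_is_linear.

Lemma killing_sym x y : killing c x y = killing c y x.
Proof. exact: mxtrace_mulC. Qed.

Lemma killing_is_bilinear : bilinear_for
  (GRing.Scale.Law.clone _ _ *%R _) (GRing.Scale.Law.clone _ _ *%R _) (killing c).
Proof.
have linl y : scalar (killing c ^~ y).
  by move=> k u v; rewrite /killing linearP mulmxDl -scalemxAl mxtraceD mxtraceZ.
by split=> // x k u v; rewrite !(killing_sym x) linl.
Qed.

HB.instance Definition _ := bilinear_isBilinear.Build K 'rV[K]_n 'rV[K]_n K
  _ _ (killing c) killing_is_bilinear.

Definition jacobiator x y z :=
  lie_br c x (lie_br c y z) + lie_br c y (lie_br c z x) + lie_br c z (lie_br c x y).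

Lemma jacobiator_rot x y z : jacobiator x y z = jacobiator y z x.
Proof. by rewrite /jacobiator [RHS]addrC addrA. Qed.

Lemma jacobiator_linear y z : linear (fun x => jacobiator x y z).
Proof.
move=> k u v; rewrite /jacobiator !(linearPl, linearPr) /= !scalerDr.
by rewrite (AC (2*2*2) ((1*3*5)*(2*4*6))).
Qed.

Hypothesis c_lie : is_lie c.

Lemma lie_br_anti x y : lie_br c x y = - lie_br c y x.
Proof.
have := c_lie.1 (x + y).
by rewrite linearDl !linearDr /= !c_lie.1 add0r addr0 => /eqP; rewrite addr_eq0 => /eqP.
Qed.

Lemma lie_br_leibniz x y z :
  lie_br c x (lie_br c y z) = lie_br c (lie_br c x y) z + lie_br c y (lie_br c x z).
Proof.
have := c_lie.2 x y z; rewrite -addrA => /eqP; rewrite addr_eq0 => /eqP ->.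
by rewrite opprD (lie_br_anti z (lie_br c x y)) (lie_br_anti z x) linearNr /= !opprK addrC.
Qed.

Lemma ad_lie_br x y : ad c (lie_br c x y) = ad c y *m ad c x - ad c x *m ad c y.
Proof.
apply/row_matrixP => i.
by rewrite rowK linearB /= !row_mul !rowK !mul_ad lie_br_leibniz addrK.
Qed.

Lemma killing_invariant x y z : killing c (lie_br c x y) z = killing c x (lie_br c y z).
Proof.
rewrite /killing !ad_lie_br mulmxBl mulmxBr !linearB /= -!mulmxA.
by rewrite (mxtrace_mulC (ad c y)) -!mulmxA.
Qed.

Lemma killing_skew s x y : killing c (lie_br c s x) y = - killing c x (lie_br c s y).
Proof. by rewrite lie_br_anti linearNl /= killing_invariant. Qed.

End LieAlgebra.

Lemma map_lie_br (K L : comNzRingType) (f : {rmorphism K -> L}) n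
    (c : 'I_n -> 'I_n -> 'rV[K]_n) x y :
  map_mx f (lie_br c x y) = lie_br (fun i j => map_mx f (c i j)) (map_mx f x) (map_mx f y).
Proof.
rewrite /lie_br map_mx_sum; apply: eq_bigr => i _; rewrite map_mx_sum.
by apply: eq_bigr => j _; rewrite map_mxZ rmorphM !mxE.
Qed.

HB.instance Definition _ (R : realType) := GRing.RMorphism.copy (@toC R) (real_complex R).

Section RealForm.
Variables (R : realType) (n : nat).
Local Notation C := R[i].

Lemma linear_toC_eq (V : lmodType C) m (A : 'M[R]_(m, n)) (f g : 'rV[C]_n -> V) :
    linear f -> linear g ->
    (forall y, (y <= A)%MS -> f (map_mx (@toC R) y) = g (map_mx (@toC R) y)) ->
  forall x, (x <= map_mx (@toC R) A)%MS -> f x = g x.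
Proof.
move=> f_lin g_lin fg x /submxP[u ->].
pose fL : {linear 'rV[C]_n -> V} := HB.pack f (GRing.isLinear.Build _ _ _ _ f f_lin).
pose gL : {linear 'rV[C]_n -> V} := HB.pack g (GRing.isLinear.Build _ _ _ _ g g_lin).
change f with (fL : _ -> _); change g with (gL : _ -> _).
rewrite mulmx_sum_row !linear_sum; apply: eq_bigr => i _.
by rewrite !linearZ -map_row /= fg ?row_sub.
Qed.

Lemma linear_toC_eq1 (V : lmodType C) (f g : 'rV[C]_n -> V) :
    linear f -> linear g -> (forall y, f (map_mx (@toC R) y) = g (map_mx (@toC R) y)) ->
  f =1 g.
Proof.
move=> f_lin g_lin fg x.
by apply: (linear_toC_eq (A := 1%:M)) => //; rewrite map_mx1 submx1.
Qed.

End RealForm.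

Section Complexification.
Variables (R : realType) (n : nat) (c : 'I_n -> 'I_n -> 'rV[R]_n).
Local Notation C := R[i].
Local Notation cc := (cC c).

Lemma lie_br_toC x y :
  lie_br cc (map_mx (@toC R) x) (map_mx (@toC R) y) = map_mx (@toC R) (lie_br c x y).
Proof. by rewrite map_lie_br. Qed.

Lemma cC_lie : is_lie c -> is_lie cc.
Proof.
move=> c_lie; have lin0 : linear (fun _ : 'rV[C]_n => 0 : 'rV[C]_n).
  by move=> k u v; rewrite scaler0 addr0.
have anti x y : lie_br cc x y + lie_br cc y x = 0.
  move: x; apply: (linear_toC_eq1 _ lin0) => [k u v|a].
    by rewrite !(linearPl, linearPr) /= scalerDr addrACA.
  move: y; apply: (linear_toC_eq1 _ lin0) => [k u v|b].
    by rewrite !(linearPl, linearPr) /= scalerDr addrACA.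
  by rewrite !lie_br_toC -map_mxD (lie_br_anti c_lie b) addrN map_mx0.
(* [x, x] = 0 is not linear in x: go through antisymmetry and divide by 2. *)
split=> [x|x y z].
  by have /eqP := anti x x; rewrite -mulr2n -scaler_nat scaler_eq0 pnatr_eq0 => /eqP.
move: x; apply: (linear_toC_eq1 (jacobiator_linear _ _ _) lin0) => a.
rewrite jacobiator_rot; move: y.
apply: (linear_toC_eq1 (jacobiator_linear _ _ _) lin0) => b.
rewrite jacobiator_rot; move: z.
apply: (linear_toC_eq1 (jacobiator_linear _ _ _) lin0) => d.
by rewrite /jacobiator !lie_br_toC -!map_mxD c_lie.2 map_mx0.
Qed.

Lemma conjv_toC m (M : 'M[R]_(m, n)) : conjv (map_mx (@toC R) M) = map_mx (@toC R) M.
Proof. by apply/matrixP => i j; rewrite !mxE conjc_real. Qed.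

Lemma conjvK m : involutive (@conjv R n m).
Proof. by move=> M; apply/matrixP => i j; rewrite !mxE conjcK. Qed.

Lemma conjvD m (M N : 'M[C]_(m, n)) : conjv (M + N) = conjv M + conjv N.
Proof. exact: map_mxD. Qed.

Lemma conjvZ m a (M : 'M[C]_(m, n)) : conjv (a *: M) = conjc a *: conjv M.
Proof. exact: map_mxZ. Qed.

Lemma conjc_i : conjc 'i%C = - 'i%C :> C.
Proof. by apply/eqP; rewrite eq_complex /= oppr0 !eqxx. Qed.

Lemma conjv_lie_br x y : conjv (lie_br cc x y) = lie_br cc (conjv x) (conjv y).
Proof.
rewrite /conjv map_lie_br; congr lie_br.
by apply/funext => i; apply/funext => j; apply: conjv_toC.
Qed.

Lemma row_conjv m (M : 'M[C]_(m, n)) r : row r (conjv M) = conjv (row r M).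
Proof. by rewrite /conjv map_row. Qed.

End Complexification.

Section SigmaForm.
Variables (R : realType) (n : nat) (c : 'I_n -> 'I_n -> 'rV[R]_n).
Hypothesis c_lie : is_lie c.
Local Notation C := R[i].
Local Notation cc := (cC c).
Let cc_lie : is_lie cc := cC_lie c_lie.

Definition Sigma_bilin k (X Y : 'M[C]_(k, n)) : 'rV[C]_n :=
  'i%C *: \sum_r lie_br cc (row r X) (row r Y).

Lemma Sigma_bilin_linearl k (Y : 'M[C]_(k, n)) : linear (fun X => Sigma_bilin X Y).
Proof.
move=> a X X'; rewrite /Sigma_bilin; under eq_bigr => r _ do rewrite linearP linearPl /=.
by rewrite big_split /= -scaler_sumr scalerDr !scalerA mulrC.
Qed.

Lemma Sigma_bilin_linearr k (X : 'M[C]_(k, n)) : linear (Sigma_bilin X).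
Proof.
move=> a Y Y'; rewrite /Sigma_bilin; under eq_bigr => r _ do rewrite linearP linearPr /=.
by rewrite big_split /= -scaler_sumr scalerDr !scalerA mulrC.
Qed.

Lemma SigmaE k (X : 'M[C]_(k, n)) : Sigma c X = Sigma_bilin X (conjv X).
Proof. by congr (_ *: _); apply: eq_bigr => r _; rewrite row_conjv. Qed.

Lemma conjv_Sigma_bilin k (X Y : 'M[C]_(k, n)) :
  conjv (Sigma_bilin X Y) = Sigma_bilin (conjv Y) (conjv X).
Proof.
rewrite /Sigma_bilin conjvZ conjc_i scaleNr -scalerN; congr (_ *: _).
rewrite /conjv map_mx_sum /= -sumrN; apply: eq_bigr => r _.
by rewrite -/(conjv _) conjv_lie_br (lie_br_anti cc_lie) opprK -!row_conjv.
Qed.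

Lemma killing_Sigma_bilin k S (X Y : 'M[C]_(k, n)) :
  killing cc S (Sigma_bilin X (conjv Y)) =
  'i%C * \sum_r hermK c (lie_br cc S (row r X)) (row r Y).
Proof.
rewrite linearZr linear_sumr /=; congr (_ * _); apply: eq_bigr => r _.
by rewrite -(killing_invariant cc_lie) row_conjv.
Qed.

Lemma is_mxcderive_Sigma x k (gam : R -> 'M[C]_(k, n)) A : is_mxcderive x gam A ->
  is_mxcderive x (fun t => Sigma c (gam t))
    (Sigma_bilin A (conjv (gam x)) + Sigma_bilin (gam x) (conjv A)).
Proof.
move=> gamA; rewrite (funext (fun t => SigmaE (gam t))).
exact (is_mxcderive_bilinear (@Sigma_bilin_linearl k) (@Sigma_bilin_linearr k) gamA
  (is_mxcderive_conj gamA)).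
Qed.

Lemma is_derive_normsq x (F : R -> 'rV[C]_n) D : is_mxcderive x F D ->
  is_derive x 1 (fun t => normsq c (F t))
    (- complex.Re (killing cc D (conjv (F x)) + killing cc (F x) (conjv D))).
Proof.
move=> FD; have [KRe _] := is_cderive_biscalar (phi := killing cc)
  (fun y => linearPl _ y) (fun y => linearPr _ y) FD (is_mxcderive_conj FD).
exact: is_deriveN KRe.
Qed.

Lemma hermK_suml k (a : 'I_k -> C) (v : 'I_k -> 'rV[C]_n) y :
  hermK c (\sum_j a j *: v j) y = \sum_j a j * hermK c (v j) y.
Proof. by rewrite /hermK linear_sumlz; apply: eq_bigr => j _; rewrite linearZl. Qed.

Lemma hermK_sumr k (a : 'I_k -> C) (v : 'I_k -> 'rV[C]_n) x :
  hermK c x (\sum_j a j *: v j) = \sum_j conjc (a j) * hermK c x (v j).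
Proof.
rewrite /hermK /conjv map_mx_sum linear_sumr; apply: eq_bigr => j _.
by rewrite map_mxZ linearZr.
Qed.

Lemma hermK_ad_skew S x y : conjv S = S ->
  hermK c (lie_br cc S x) y = - hermK c x (lie_br cc S y).
Proof. by move=> S_real; rewrite /hermK (killing_skew cc_lie) -{1}S_real -conjv_lie_br. Qed.

Lemma hermK_unitary_frame k (E : 'M[C]_(k, n)) (a : 'I_k -> C) m :
  unitary_frame c E -> hermK c (\sum_j a j *: row j E) (row m E) = a m.
Proof.
move=> Eu; rewrite hermK_suml (bigD1 m) //= big1 => [|j /negbTE jm].
  by rewrite Eu eqxx mulr1 addr0.
by rewrite Eu jm mulr0.
Qed.

Lemma ad_unitary_frame_skew k (E : 'M[C]_(k, n)) S (M : 'M[C]_k) :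
    unitary_frame c E -> conjv S = S ->
    (forall r, lie_br cc S (row r E) = \sum_j M r j *: row j E) ->
  forall r j, M r j = - conjc (M j r).
Proof.
move=> Eu S_real SM r j.
rewrite -(hermK_unitary_frame (M r) j Eu) -SM hermK_ad_skew // SM hermK_sumr.
rewrite (bigD1 r) //= big1 => [|l /negbTE lr]; last by rewrite Eu eq_sym lr mulr0.
by rewrite Eu eqxx mulr1 addr0.
Qed.

Lemma killing_Sigma_tangent k (E A : 'M[C]_(k, n)) :
    unitary_frame c E ->
    (forall r j, hermK c (row r A) (row j E) + hermK c (row r E) (row j A) = 0) ->
    (forall x, (x <= E)%MS -> (lie_br cc (Sigma c E) x <= E)%MS) ->
  killing cc (Sigma c E) (Sigma_bilin A (conjv E) + Sigma_bilin E (conjv A)) = 0.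
Proof.
move=> Eu EA E_stable; set S := Sigma c E.
have S_real : conjv S = S by rewrite /S SigmaE conjv_Sigma_bilin conjvK.
have [M SM] : exists M : 'M[C]_k, forall r, lie_br cc S (row r E) = \sum_j M r j *: row j E.
  have /submxP[M SE] : (\matrix_r lie_br cc S (row r E) <= E)%MS.
    by apply/row_subP => r; rewrite rowK E_stable ?row_sub.
  exists M => r; have := congr1 (row r) SE; rewrite rowK row_mul mulmx_sum_row => ->.
  by apply: eq_bigr => j _; rewrite mxE.
have M_skew := ad_unitary_frame_skew Eu S_real SM.
(* The skewness of ad S, of M and of the tangent condition give three signs. *)
have AE : \sum_r hermK c (lie_br cc S (row r A)) (row r E) =
          - \sum_r \sum_j M j r * hermK c (row r E) (row j A).
  rewrite -sumrN; apply: eq_bigr => r _; rewrite hermK_ad_skew // SM hermK_sumr.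
  apply/eqP; rewrite eqr_opp; apply/eqP; apply: eq_bigr => j _.
  rewrite (M_skew j r) mulNr -mulrN; congr (_ * _).
  by apply/eqP; rewrite -addr_eq0 EA.
have EA' : \sum_r hermK c (lie_br cc S (row r E)) (row r A) =
           \sum_r \sum_j M j r * hermK c (row r E) (row j A).
  by under eq_bigr => r _ do rewrite SM hermK_suml; rewrite [LHS]exchange_big.
rewrite linearDr /= !killing_Sigma_bilin -mulrDr.
by rewrite [X in _ * (X + _)]AE [X in _ * (_ + X)]EA' addNr mulr0.
Qed.

Lemma is_derive_normsq_Sigma x k (gam : R -> 'M[C]_(k, n)) A : is_mxcderive x gam A ->
  is_derive x 1 (fun t => normsq c (Sigma c (gam t)))
    (- complex.Re (killing cc (Sigma c (gam x))
         (Sigma_bilin A (conjv (gam x)) + Sigma_bilin (gam x) (conjv A)) *+ 2)).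
Proof.
move=> gamA; have := is_derive_normsq (is_mxcderive_Sigma gamA).
set S := Sigma c (gam x); set DS := Sigma_bilin A _ + _.
have S_real : conjv S = S by rewrite /S SigmaE conjv_Sigma_bilin conjvK.
have DS_real : conjv DS = DS by rewrite /DS conjvD !conjv_Sigma_bilin !conjvK addrC.
by rewrite S_real DS_real [killing cc DS S]killing_sym mulr2n.
Qed.

Lemma unitary_frame_tangent x k (gam : R -> 'M[C]_(k, n)) A :
    (forall t, unitary_frame c (gam t)) -> is_mxcderive x gam A ->
  forall r j, hermK c (row r A) (row j (gam x)) + hermK c (row r (gam x)) (row j A) = 0.
Proof.
move=> gam_u gamA r j.
have linl Y : scalar (fun X : 'M[C]_(k, n) => killing cc (row r X) (row j Y)).
  by move=> a U V; rewrite linearP linearPl.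
have linr X : scalar (fun Y : 'M[C]_(k, n) => killing cc (row r X) (row j Y)).
  by move=> a U V; rewrite linearP linearPr.
have gamK := is_cderive_biscalar linl linr gamA (is_mxcderive_conj gamA).
have gamK0 : is_cderive x (fun t => killing cc (row r (gam t)) (row j (conjv (gam t)))) 0.
  rewrite (_ : (fun t => _) = fun=> (r == j)%:R); first exact: is_cderive_cst.
  by apply/funext => t; rewrite row_conjv; apply: gam_u.
by rewrite /hermK -!row_conjv (is_cderive_unique gamK gamK0).
Qed.

End SigmaForm.

Section PointedBSD.
Variables (R : realType) (n : nat) (c : 'I_n -> 'I_n -> 'rV[R]_n).
Variables (l p : 'M[R]_n) (H0 : 'rV[R]_n).
Hypothesis bsd : pointed_bsd c l p H0.
Local Notation C := R[i].
Local Notation cc := (cC c).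
Local Notation H := (map_mx (@toC R) H0).
Local Notation pp := (pplus c p H0).

Let cc_lie : is_lie cc.
Proof. by case: bsd => c_lie *; apply: cC_lie. Qed.

Lemma lie_br_H0_lC x : (x <= map_mx (@toC R) l)%MS -> lie_br cc H x = 0.
Proof.
case: bsd => _ _ _ _ [_ H0l _] xl.
apply: (linear_toC_eq (f := lie_br cc H) (g := fun=> 0) _ _ _ xl).
- exact: linearPr.
- by move=> a u v; rewrite scaler0 addr0.
by move=> y yl; rewrite lie_br_toC H0l // map_mx0.
Qed.

Lemma lie_br_H0_H0_pC x :
  (x <= map_mx (@toC R) p)%MS -> lie_br cc H (lie_br cc H x) = - x.
Proof.
case: bsd => _ _ _ _ [_ _ H0p] xp.
apply: (linear_toC_eq (f := fun x => lie_br cc H (lie_br cc H x)) (g := -%R) _ _ _ xp).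
- by move=> a u v; rewrite !linearPr.
- by move=> a u v; rewrite opprD scalerN.
by move=> y yp; rewrite !lie_br_toC H0p // map_mxN.
Qed.

Lemma lC_pC_decompose (x : 'rV[C]_n) : exists2 a, (a <= map_mx (@toC R) l)%MS &
  exists2 b, (b <= map_mx (@toC R) p)%MS & x = a + b.
Proof.
case: bsd => _ [[/andP[_ lp1] _] _] _ _ _.
have /sub_addsmxP[[u v] /= ->] : (x <= map_mx (@toC R) l + map_mx (@toC R) p)%MS.
  apply: submx_trans (submx1 x) _.
  by rewrite -(map_addsmx (@toC R)) -(map_mx1 (@toC R)) map_submx.
exists (u *m map_mx (@toC R) l); first exact: submxMl.
by exists (v *m map_mx (@toC R) p); first exact: submxMl.
Qed.

(* An i-eigenvector v of ad H0 is minus its image under (ad H0)^2, which kills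
   the l-component of v and negates its p-component. *)
Lemma eigen_H0_sub_pC v : lie_br cc H v = 'i%C *: v -> (v <= map_mx (@toC R) p)%MS.
Proof.
move=> Hv; have [a al [b bp vab]] := lC_pC_decompose v.
have : lie_br cc H (lie_br cc H v) = - v.
  by rewrite Hv linearZr /= Hv scalerA -expr2 sqr_i scaleN1r.
rewrite {1}vab !linearDr /= (lie_br_H0_lC al) linear0r add0r (lie_br_H0_H0_pC bp).
by move=> /oppr_inj <-.
Qed.

Lemma sub_pplus x : (x <= pp)%MS = (lie_br cc H x == 'i%C *: x).
Proof.
rewrite sub_capmx sub_kermx mulmxBr mul_ad mul_mx_scalar subr_eq0.
by apply/idP/idP => [/andP[] //|Hx]; rewrite Hx andbT (eigen_H0_sub_pC (eqP Hx)).
Qed.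

Lemma lie_br_H0_conjv_pplus x : (x <= pp)%MS -> lie_br cc H (conjv x) = - 'i%C *: conjv x.
Proof.
by rewrite sub_pplus => /eqP Hx; rewrite -(conjv_toC H0) -conjv_lie_br Hx conjvZ conjc_i.
Qed.

Lemma lie_br_H0_Sigma k (X : 'M[C]_(k, n)) : (X <= pp)%MS -> lie_br cc H (Sigma c X) = 0.
Proof.
move=> Xpp; rewrite /Sigma linearZr linear_sumr /= big1 ?scaler0 // => r _.
have rpp : (row r X <= pp)%MS := submx_trans (row_sub r X) Xpp.
move: (rpp); rewrite sub_pplus => /eqP Hr.
rewrite (lie_br_leibniz cc_lie) Hr (lie_br_H0_conjv_pplus rpp) linearZl linearZr /=.
by rewrite scaleNr addrN.
Qed.

Lemma pplus_lie_br_Sigma k (X : 'M[C]_(k, n)) x :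
  (X <= pp)%MS -> (x <= pp)%MS -> (lie_br cc (Sigma c X) x <= pp)%MS.
Proof.
move=> Xpp; rewrite !sub_pplus => /eqP Hx.
by rewrite (lie_br_leibniz cc_lie) lie_br_H0_Sigma // linear0l add0r Hx linearZr.
Qed.

End PointedBSD.

Section Embedding.
Variables (R : realType) (n n' : nat).
Variables (c : 'I_n -> 'I_n -> 'rV[R]_n) (H0 : 'rV[R]_n).
Variables (c' : 'I_n' -> 'I_n' -> 'rV[R]_n') (H0' : 'rV[R]_n').
Variable P : 'M[R]_(n', n).
Hypothesis tg : tg_embedding c H0 c' H0' P.
Local Notation C := R[i].
Local Notation PC := (map_mx (@toC R) P).

Lemma lie_br_mulmx_toC x y :
  lie_br (cC c) (x *m PC) (y *m PC) = lie_br (cC c') x y *m PC.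
Proof.
case: tg => _ rho_br _; move: x; apply: linear_toC_eq1 => [a u v|a u v|a].
- by rewrite mulmxDl -scalemxAl linearPl.
- by rewrite linearPl mulmxDl -scalemxAl.
move: y; apply: linear_toC_eq1 => [b u v|b u v|b].
- by rewrite mulmxDl -scalemxAl linearPr.
- by rewrite linearPr mulmxDl -scalemxAl.
by rewrite [in RHS]lie_br_toC -[in RHS]map_mxM -rho_br -lie_br_toC !map_mxM.
Qed.

Lemma Sigma_mulmx_toC k (X : 'M[C]_(k, n')) : Sigma c (X *m PC) = Sigma c' X *m PC.
Proof.
rewrite /Sigma -scalemxAl mulmx_suml; congr (_ *: _); apply: eq_bigr => r _.
by rewrite row_mul /conjv map_mxM -/(conjv PC) conjv_toC lie_br_mulmx_toC.
Qed.

Lemma Sigma_mulmx_toC_stable l' p' k (X : 'M[C]_(k, n')) :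
    pointed_bsd c' l' p' H0' -> (X <= pplus c' p' H0')%MS ->
  forall x, (x <= X *m PC)%MS ->
    (lie_br (cC c) (Sigma c (X *m PC)) x <= pplus c' p' H0' *m PC)%MS.
Proof.
move=> bsd' Xpp x /submxP[u ->].
rewrite Sigma_mulmx_toC mulmxA lie_br_mulmx_toC submxMr //.
by apply: (pplus_lie_br_Sigma bsd') => //; apply: submx_trans (submxMl u X) Xpp.
Qed.

End Embedding.

Lemma frame_curve_is_mxcderive (R : realType) n (c : 'I_n -> 'I_n -> 'rV[R]_n) k
    (V : 'M[R[i]]_n) (gam : R -> 'M[R[i]]_(k, n)) :
  frame_curve c V gam -> exists A, is_mxcderive 0 gam A.
Proof.
move=> [_ gam_der].
exists (\matrix_(i, j) ('D_1 (fun t => complex.Re (gam t i j)) 0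
                       +i* 'D_1 (fun t => complex.Im (gam t i j)) 0)%C).
by move=> i j; rewrite mxE; have [dRe dIm] := gam_der i j; split; apply: derivableP.
Qed.

Theorem lemma7 (R : realType) (n n' : nat)
  (c : 'I_n -> 'I_n -> 'rV[R]_n) (l p : 'M[R]_n) (H0 : 'rV[R]_n)
  (c' : 'I_n' -> 'I_n' -> 'rV[R]_n') (l' p' : 'M[R]_n') (H0' : 'rV[R]_n')
  (P : 'M[R]_(n', n)) :
  pointed_bsd c l p H0 ->
  pointed_bsd c' l' p' H0' ->
  tg_embedding c H0 c' H0' P ->
  Sigma_critical c (\rank (pplus c' p' H0')) (pplus c p H0)
    (pplus c' p' H0' *m map_mx (@toC R) P).
Proof.
move=> bsd bsd' tg gam gam_curve /andP[EB BE].
have c_lie : is_lie c by case: bsd.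
have [A gamA] := frame_curve_is_mxcderive gam_curve.
have gam_u t : unitary_frame c (gam t) := (gam_curve.1 t).2.
have [D EX] := submxP EB; rewrite mulmxA in EX.
have E_stable x : (x <= gam 0)%MS -> (lie_br (cC c) (Sigma c (gam 0)) x <= gam 0)%MS.
  rewrite EX => /(Sigma_mulmx_toC_stable tg bsd' (submxMl D _)).
  by move/submx_trans; apply; rewrite -EX.
have := is_derive_normsq_Sigma c_lie gamA.
rewrite (killing_Sigma_tangent c_lie (gam_u 0) (unitary_frame_tangent gam_u gamA) E_stable).
rewrite mul0rn /= oppr0 => normsq_der.
by split; [exact: ex_derive | rewrite derive1E derive_val].
Qed.
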